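(* Let $K\subseteq\mathbb{R}^d$ be a convex body and $\varepsilon>0$, and suppose the width of $K$ in every direction is at least $\varepsilon$. Then for every $i \in I^{\pm}$, $\mathrm{area}(K_i) \le C\cdot \mathrm{area}(K)$, where $C$ is a constant depending only on $d$.
   Context: $d$ is a fixed dimension. $\mathrm{area}(K)$ is the surface area of $K$. For a unit vector $u$, $H^+(u)$ denotes the closed supporting halfspace of $K$ with outer normal $u$ (so $K\subseteq H^+(u)$). Let $e_1,\dots,e_d$ be the coordinate unit vectors, $e_{-j}=-e_j$, and $I^{\pm}=\{\pm1,\dots,\pm d\}$. For $i\in I^\pm$ let $V_i=\{u\in\mathbb{S}^{d-1} : \langle u,e_i\rangle \ge \langle u,e_j\rangle \text{ for all } j\in I^\pm, j\ne i\}$ and $S_i=\bigcap_{u\in V_i}H^+(u)$. Fix $i$ and call $e_i$ the upward vertical direction; let $X_i$ be the hyperplane through the origin orthogonal to $e_i$, and for a point or set $S$ let $S^{\downarrow}$ be its orthogonal projection onto $X_i$. For $\alpha\ge0$ let $K^\downarrow\oplus\alpha$ be the set of points of $X_i$ within Euclidean distance $\alpha$ of $K^\downarrow$, and $K_i^{(\alpha)}=\{x\in S_i: x^\downarrow\in K^\downarrow\oplus\alpha\}$; set $K_i=K_i^{(2\varepsilon)}$. The lower boundary of $K_i$ consists of the boundary points of $K_i$ that have a non-vertical supporting hyperplane, and $\mathrm{area}(K_i)$ denotes the surface area of this lower boundary. *)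

From HB Require Import structures.
From mathcomp Require Import all_boot all_order all_algebra.
From mathcomp Require Import boolp classical_sets reals constructive_ereal ereal sequences.
Set Implicit Arguments. Unset Strict Implicit. Unset Printing Implicit Defensive.
Import Order.TTheory GRing.Theory Num.Theory.
Local Open Scope classical_set_scope.
Local Open Scope ring_scope.

Section Defs.
Variables (R : realType) (d : nat).
Notation V := 'rV[R]_d.

Definition dot (x y : V) : R := \sum_(k < d) x 0 k * y 0 k.
Definition enorm (x : V) : R := Num.sqrt (dot x x).

Definition eball (x : V) (r : R) : set V := [set y | enorm (y - x) < r].
Definition einterior (A : set V) : set V :=
  [set x | exists2 r, 0 < r & eball x r `<=` A].
Definition eclosure (A : set V) : set V :=
  [set x | forall r, 0 < r -> exists2 y, A y & enorm (y - x) < r].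
Definition eboundary (A : set V) : set V := eclosure A `\` einterior A.
Definition eclosed (A : set V) : Prop := eclosure A `<=` A.
Definition ebounded (A : set V) : Prop := exists M : R, forall x, A x -> enorm x <= M.

Definition convex_set (A : set V) : Prop :=
  forall x y (t : R), A x -> A y -> 0 <= t <= 1 -> A ((1 - t) *: x + t *: y).
Definition convex_body (K : set V) : Prop :=
  [/\ convex_set K, eclosed K, ebounded K & einterior K !=set0].

Definition supp (K : set V) (u : V) : R := sup [set dot x u | x in K].
Definition width (K : set V) (u : V) : R := supp K u + supp K (- u).
Definition Hplus (K : set V) (u : V) : set V := [set x | dot x u <= supp K u].

(* I^{+-} = {+-1,...,+-d}: index (j, true) is +(j+1), (j, false) is -(j+1) *)
Definition Ipm := ('I_d * bool)%type.
Definition eI (i : Ipm) : V :=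
  \row_k (if k == i.1 then (if i.2 then 1 else -1) else 0).

Definition Vreg (i : Ipm) : set V :=
  [set u | enorm u = 1 /\ forall j : Ipm, j != i -> dot u (eI j) <= dot u (eI i)].
Definition Sreg (K : set V) (i : Ipm) : set V :=
  \bigcap_(u in Vreg i) Hplus K u.

Definition Xi (i : Ipm) : set V := [set x | dot x (eI i) = 0].
Definition proj (i : Ipm) (x : V) : V := x - dot x (eI i) *: eI i.
Definition thick_proj (K : set V) (i : Ipm) (alpha : R) : set V :=
  [set y | Xi i y /\ exists2 z, K z & enorm (y - proj i z) <= alpha].
Definition Kalpha (K : set V) (i : Ipm) (alpha : R) : set V :=
  [set x | Sreg K i x /\ thick_proj K i alpha (proj i x)].

Definition lower_boundary (A : set V) (i : Ipm) : set V :=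
  [set x | eboundary A x /\
     exists v : V, dot v (eI i) != 0 /\ forall y, A y -> dot y v <= dot x v].

(* (unnormalized) s-dimensional Hausdorff measure w.r.t. the Euclidean metric:
   H^s(A) = sup_{delta>0} inf { sum_n diam(C_n)^s : A ⊆ U_n C_n, diam C_n <= delta } *)
Definition hcover_sums (s : nat) (delta : R) (A : set V) : set \bar R :=
  [set z | exists (C : nat -> set V) (r : nat -> R),
     [/\ forall n, 0 <= r n <= delta,
         forall n x y, C n x -> C n y -> enorm (x - y) <= r n,
         A `<=` \bigcup_n C n &
         z = (\sum_(0 <= n <oo) ((r n ^+ s)%:E))%E]].
Definition hausdorff_delta (s : nat) (delta : R) (A : set V) : \bar R :=
  ereal_inf (hcover_sums s delta A).
Definition hausdorff (s : nat) (A : set V) : \bar R :=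
  ereal_sup [set hausdorff_delta s delta A | delta in [set delta : R | 0 < delta]].

Definition area (K : set V) : \bar R := hausdorff d.-1 (eboundary K).
Definition area_lower (A : set V) (i : Ipm) : \bar R :=
  hausdorff d.-1 (lower_boundary A i).
End Defs.

(* A convex body K whose width is at least eps in every direction contains a ball of
   radius eps / 24^d.  By induction on the codimension, the projection of K onto the
   orthogonal complement of an orthonormal family contains a ball: combine a chord of K
   realising three quarters of the projected diameter with the ball provided one
   dimension down.

   S_i is the region below the graph (in direction e_i) of a d-Lipschitz function h on
   X_i, and a non-vertical supporting hyperplane forces a lower boundary point of K_i
   onto this graph, over the closed 2 eps-neighbourhood of the projection K↓ of K.  The
   homothety of ratio 1 + 3 * 24^d centred at the projected centre of the ball maps K↓
   onto a superset of that neighbourhood, and each point of K↓ is the projection of a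
   boundary point of K.  So the lower boundary of K_i is the image of the boundary of K
   under a Lipschitz map, whose constant bounds the growth of the (d-1)-dimensional
   Hausdorff measure. *)

From HB Require Import structures.
From mathcomp Require Import all_boot all_order all_algebra.
From mathcomp Require Import boolp classical_sets reals constructive_ereal ereal sequences.
From mathcomp Require Import ring lra zify.
Import Order.TTheory GRing.Theory Num.Theory.
Local Open Scope classical_set_scope.
Local Open Scope ring_scope.

Section Euclid.
Context {R : realType} {d : nat}.
Notation V := 'rV[R]_d.
Implicit Types x y z : V.

Lemma dotC x y : dot x y = dot y x.
Proof. by apply: eq_bigr => k _; rewrite mulrC. Qed.
Lemma dotDl x y z : dot (x + y) z = dot x z + dot y z.
Proof. by rewrite /dot -big_split; apply: eq_bigr => k _; rewrite mxE mulrDl. Qed.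
Lemma dotZl (a : R) x y : dot (a *: x) y = a * dot x y.
Proof. by rewrite /dot mulr_sumr; apply: eq_bigr => k _; rewrite mxE mulrA. Qed.
Lemma dotNl x y : dot (- x) y = - dot x y.
Proof. by rewrite -scaleN1r dotZl mulN1r. Qed.
Lemma dotBl x y z : dot (x - y) z = dot x z - dot y z.
Proof. by rewrite dotDl dotNl. Qed.
Lemma dotDr x y z : dot x (y + z) = dot x y + dot x z.
Proof. by rewrite dotC dotDl !(dotC x). Qed.
Lemma dotZr (a : R) x y : dot x (a *: y) = a * dot x y.
Proof. by rewrite dotC dotZl dotC. Qed.
Lemma dotNr x y : dot x (- y) = - dot x y.
Proof. by rewrite dotC dotNl dotC. Qed.
Lemma dotBr x y z : dot x (y - z) = dot x y - dot x z.
Proof. by rewrite dotDr dotNr. Qed.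
Lemma dot0l x : dot 0 x = 0.
Proof. by rewrite -(scale0r 0) dotZl mul0r. Qed.
Lemma dot0r x : dot x 0 = 0.
Proof. by rewrite dotC dot0l. Qed.
Lemma dotxx_ge0 x : 0 <= dot x x.
Proof. by apply: sumr_ge0 => k _; rewrite -expr2 sqr_ge0. Qed.
Lemma dotxx_eq0 {x} : dot x x = 0 -> x = 0.
Proof.
move=> /eqP; rewrite /dot psumr_eq0 => [/allP x0|k _]; last by rewrite -expr2 sqr_ge0.
apply/rowP => k; rewrite mxE; apply/eqP; rewrite -sqrf_eq0 expr2.
exact: (implyP (x0 k (mem_index_enum k))).
Qed.
Lemma dot_mulmx_tr x y : dot x y = (x *m y^T) 0 0.
Proof. by rewrite /dot !mxE; apply: eq_bigr => k _; rewrite mxE. Qed.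

Lemma enorm_ge0 x : 0 <= enorm x.
Proof. exact: sqrtr_ge0. Qed.
Lemma enorm_sq x : enorm x ^+ 2 = dot x x.
Proof. by rewrite sqr_sqrtr // dotxx_ge0. Qed.
Lemma enorm0 : enorm (0 : V) = 0.
Proof. by rewrite /enorm dot0l sqrtr0. Qed.
Lemma enorm_eq0 {x} : enorm x = 0 -> x = 0.
Proof. by move=> x0; apply: dotxx_eq0; rewrite -enorm_sq x0 expr0n. Qed.
Lemma enorm1_dotxx {x} : enorm x = 1 -> dot x x = 1.
Proof. by move=> x1; rewrite -enorm_sq x1 expr1n. Qed.
Lemma enorm_le_sqr (a : R) x : 0 <= a -> dot x x <= a ^+ 2 -> enorm x <= a.
Proof.
move=> a0 xa; rewrite -(ler_pXn2r (_ : 0 < 2)%N) ?nnegrE ?enorm_ge0 //.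
by rewrite enorm_sq.
Qed.

Lemma cauchy_schwarz x y : `|dot x y| <= enorm x * enorm y.
Proof.
have sq_le : dot x y ^+ 2 <= dot x x * dot y y.
  have [y0|y0] := eqVneq (dot y y) 0.
    by rewrite (dotxx_eq0 y0) dot0r dot0l mulr0 expr0n.
  have yy_gt0 : 0 < dot y y by rewrite lt_neqAle eq_sym y0 dotxx_ge0.
  have := dotxx_ge0 (x - (dot x y / dot y y) *: y).
  rewrite !(dotBl, dotBr, dotZl, dotZr) (dotC y x).
  set a := dot x x; set b := dot x y; set c := dot y y.
  have -> : a - b / c * b - b / c * (b - b / c * c) = (a * c - b ^+ 2) / c.
    by field; rewrite gt_eqF.
  by rewrite pmulr_lge0 ?invr_gt0 // subr_ge0.
rewrite -(ler_pXn2r (_ : 0 < 2)%N) ?nnegrE ?mulr_ge0 ?enorm_ge0 //.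
by rewrite real_normK ?num_real // exprMn !enorm_sq.
Qed.

Lemma dot_le_enorm x y : dot x y <= enorm x * enorm y.
Proof. exact: le_trans (ler_norm _) (cauchy_schwarz x y). Qed.

Lemma enormD x y : enorm (x + y) <= enorm x + enorm y.
Proof.
apply: enorm_le_sqr; first by rewrite addr_ge0 ?enorm_ge0.
rewrite !(dotDl, dotDr) (dotC y x) sqrrD !enorm_sq.
have := dot_le_enorm x y; lra.
Qed.
Lemma enormZ (a : R) x : enorm (a *: x) = `|a| * enorm x.
Proof.
by rewrite /enorm dotZl dotZr mulrA -expr2 sqrtrM ?sqr_ge0 // sqrtr_sqr.
Qed.
Lemma enormN x : enorm (- x) = enorm x.
Proof. by rewrite -scaleN1r enormZ normrN1 mul1r. Qed.
Lemma enormB x y : enorm (x - y) = enorm (y - x).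
Proof. by rewrite -enormN opprB. Qed.
Lemma enormB_le x y : enorm (x - y) <= enorm x + enorm y.
Proof. by apply: le_trans (enormD _ _) _; rewrite enormN. Qed.
End Euclid.

Lemma eclosure_lipschitz_le {R : realType} {d : nat} {A : set 'rV[R]_d}
    (f : 'rV[R]_d -> R) (C : R) {m x} :
  0 <= C -> (forall a b, f a - f b <= C * enorm (a - b)) ->
  (forall a, A a -> f a <= m) -> eclosure A x -> f x <= m.
Proof.
move=> C_ge0 f_lip f_le Ax; apply/ler_addgt0Pr => r r_gt0.
have [a Aa ax] := Ax (r / (C + 1)) (divr_gt0 r_gt0 (ltr_wpDl C_ge0 ltr01)).
have : C * enorm (x - a) <= r.
  rewrite enormB; apply: le_trans (ler_wpM2l C_ge0 (ltW ax)) _.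
  rewrite mulrA ler_pdivrMr ?ltr_wpDl //; lra.
by have := f_lip x a; have := f_le a Aa; lra.
Qed.

Section OrthProj.
Context {R : realType} {d : nat}.
Notation V := 'rV[R]_d.
Implicit Types x y u w : V.

Lemma mulmx_tr_row x u : x *m u^T *m u = dot x u *: u.
Proof.
by apply/matrixP => i j; rewrite !mxE big_ord1 (ord1 i) dot_mulmx_tr.
Qed.

(* For [U] with orthonormal rows, the projection onto the orthogonal complement of
   its row space. *)
Definition orthproj {k} (U : 'M[R]_(k, d)) x : V := x - x *m U^T *m U.

Lemma orthprojD k (U : 'M[R]_(k, d)) x y : orthproj U (x + y) = orthproj U x + orthproj U y.
Proof. by rewrite /orthproj !mulmxDl opprD addrACA. Qed.
Lemma orthprojZ k (U : 'M[R]_(k, d)) (a : R) x : orthproj U (a *: x) = a *: orthproj U x.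
Proof. by rewrite /orthproj -!scalemxAl scalerBr. Qed.
Lemma orthprojB k (U : 'M[R]_(k, d)) x y : orthproj U (x - y) = orthproj U x - orthproj U y.
Proof. by rewrite orthprojD -scaleN1r orthprojZ scaleN1r. Qed.

Lemma orthproj_col_mx k (U : 'M[R]_(k, d)) u x :
  orthproj (col_mx U u) x = orthproj U x - dot x u *: u.
Proof. by rewrite /orthproj tr_col_mx mul_mx_row mul_row_col opprD addrA mulmx_tr_row. Qed.

Section Orthonormal.
Context {k : nat} {U : 'M[R]_(k, d)}.
Hypothesis UU : U *m U^T = 1%:M.

Lemma orthproj_orth x : orthproj U x *m U^T = 0.
Proof. by rewrite /orthproj mulmxBl -!mulmxA UU mulmx1 subrr. Qed.

Lemma orthproj_id w : w *m U^T = 0 -> orthproj U w = w.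
Proof. by move=> wU; rewrite /orthproj wU mul0mx subr0. Qed.

Lemma dot_mulmx_orth (q : 'rV[R]_k) w : w *m U^T = 0 -> dot (q *m U) w = 0.
Proof.
move=> wU; rewrite dot_mulmx_tr -mulmxA.
by rewrite -[U *m w^T]trmxK trmx_mul trmxK wU trmx0 mulmx0 mxE.
Qed.

Lemma dot_orthproj x w : w *m U^T = 0 -> dot (orthproj U x) w = dot x w.
Proof. by move=> wU; rewrite /orthproj dotBl dot_mulmx_orth // subr0. Qed.

Lemma enorm_orthproj_le x : enorm (orthproj U x) <= enorm x.
Proof.
apply: enorm_le_sqr; first exact: enorm_ge0.
set p := orthproj U x; set q := x *m U^T.
have xpq : x = p + q *m U by rewrite /p /orthproj subrK.
have pq : dot (q *m U) p = 0 by apply: dot_mulmx_orth; apply: orthproj_orth.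
clearbody p q; subst x.
rewrite enorm_sq !(dotDl, dotDr) (dotC p) pq addr0 add0r lerDl.
exact: dotxx_ge0.
Qed.

Lemma col_mx_orthonormal {u} : u *m U^T = 0 -> dot u u = 1 ->
  col_mx U u *m (col_mx U u)^T = 1%:M.
Proof.
move=> uU uu; rewrite tr_col_mx mul_col_row UU uU.
rewrite -[U *m u^T]trmxK trmx_mul trmxK uU trmx0.
have -> : u *m u^T = 1%:M.
  by apply/matrixP => i j; rewrite (ord1 i) (ord1 j) -dot_mulmx_tr uu !mxE.
by rewrite [RHS]scalar_mx_block.
Qed.

Lemma orthonormal_rows_lt_dim {u} : u *m U^T = 0 -> dot u u = 1 -> (k < d)%N.
Proof.
move=> uU uu; have := mxrankM_maxl (col_mx U u) (col_mx U u)^T.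
rewrite col_mx_orthonormal // mxrank1 => /leq_trans/(_ (rank_leq_col _)).
by rewrite addn1.
Qed.

Lemma orthproj_direction x : 0 < enorm (orthproj U x) ->
  exists u, [/\ u *m U^T = 0, dot u u = 1, dot x u = enorm (orthproj U x)
              & orthproj (col_mx U u) x = 0].
Proof.
set L := enorm (orthproj U x) => L_gt0.
have sqL : dot (orthproj U x) (orthproj U x) = L ^+ 2 by rewrite -enorm_sq.
have xP : dot x (orthproj U x) = L ^+ 2 by rewrite -dot_orthproj ?orthproj_orth.
pose u := L^-1 *: orthproj U x.
have xu : dot x u = L by rewrite dotZr xP expr2 mulKf ?gt_eqF.
exists u; split => //.
- by rewrite -scalemxAl orthproj_orth scaler0.
- by rewrite dotZl dotZr sqL mulrA -expr2 -exprMn mulVf ?gt_eqF // expr1n.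
- by rewrite orthproj_col_mx xu scalerA mulfV ?gt_eqF // scale1r subrr.
Qed.
End Orthonormal.
End OrthProj.

Section Inradius.
Context {R : realType} {d : nat}.
Notation V := 'rV[R]_d.
Context {K : set V} {eps M : R} {x0 : V}.
Hypotheses (Kconvex : convex_set K) (KM : forall x, K x -> enorm x <= M)
  (Kx0 : K x0) (eps_gt0 : 0 < eps)
  (Kwidth : forall u : V, enorm u = 1 -> eps <= width K u).

Lemma has_sup_dot v : has_sup [set dot x v | x in K].
Proof.
split; first by exists (dot x0 v), x0.
exists (M * enorm v) => _ [x Kx <-].
apply: le_trans (dot_le_enorm x v) _.
by apply: ler_wpM2r; [exact: enorm_ge0 | exact: KM].
Qed.

Lemma le_supp v x : K x -> dot x v <= supp K v.
Proof. by move=> Kx; apply: sup_upper_bound (has_sup_dot v) _ _; exists x. Qed.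

Lemma supp_adherent v {e} : 0 < e -> exists2 x, K x & supp K v - e < dot x v.
Proof. by move=> e0; have [_ [x Kx <-] ?] := sup_adherent e0 (has_sup_dot v); exists x. Qed.

Definition proj_contains_ball {k} (U : 'M[R]_(k, d)) (r : R) :=
  exists c : V, forall w : V, w *m U^T = 0 -> enorm w <= r ->
    exists2 x, K x & orthproj U x = c + w.

Lemma proj_contains_ball_trivial k (U : 'M[R]_(k, d)) r :
  ~ (exists v : V, enorm v = 1 /\ v *m U^T = 0) -> proj_contains_ball U r.
Proof.
move=> no_unit; exists (orthproj U x0) => w wU _; exists x0 => //.
suff -> : w = 0 by rewrite addr0.
apply: contra_notP no_unit => /eqP w0.
have w_gt0 : 0 < enorm w by rewrite lt_def enorm_ge0 andbT (contra_neq (@enorm_eq0 _ _ w)).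
exists ((enorm w)^-1 *: w); split; last by rewrite -scalemxAl wU scaler0.
by rewrite enormZ ger0_norm ?invr_ge0 ?enorm_ge0 // mulVf ?gt_eqF.
Qed.

Lemma long_projected_chord {k} {U : 'M[R]_(k, d)} : U *m U^T = 1%:M ->
  (exists v : V, enorm v = 1 /\ v *m U^T = 0) ->
  exists a b, [/\ K a, K b, 3 * eps < 4 * enorm (orthproj U (b - a)) &
    forall x y, K x -> K y ->
      3 * enorm (orthproj U (x - y)) < 4 * enorm (orthproj U (b - a))].
Proof.
move=> UU [v [v1 vU]].
pose S := [set enorm (orthproj U (x - y)) | x in K & y in K].
have hS : has_sup S.
  split; first by exists (enorm (orthproj U (x0 - x0))), x0 => //; exists x0.
  exists (M + M) => _ [x Kx [y Ky <-]].
  apply: le_trans (enorm_orthproj_le UU _) (le_trans (enormB_le _ _) _).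
  by apply: lerD; apply: KM.
have le_supS x y : K x -> K y -> enorm (orthproj U (x - y)) <= sup S.
  by move=> Kx Ky; apply: sup_upper_bound hS _ _; exists x => //; exists y.
have eps_le_supS : eps <= sup S.
  apply/ler_addgt0Pr => e e0.
  have e2 : 0 < e / 2 by rewrite divr_gt0.
  have [x Kx hx] := supp_adherent v e2; have [y Ky hy] := supp_adherent (- v) e2.
  have := Kwidth v v1; rewrite /width.
  have : dot (x - y) v <= sup S.
    rewrite -(dot_orthproj _ _ vU); apply: le_trans (dot_le_enorm _ _) _.
    by rewrite v1 mulr1; apply: le_supS.
  rewrite dotBl -[dot y v]opprK -dotNr; lra.
have supS_gt0 : 0 < sup S by apply: lt_le_trans eps_le_supS.
have supS4 : 0 < sup S / 4 by rewrite divr_gt0.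
have [_ [b Kb [a Ka <-]] ab_long] := sup_adherent supS4 hS.
exists a, b; split => // [|x y Kx Ky]; first lra.
by have := le_supS x y Kx Ky; lra.
Qed.

Lemma long_chord_direction {k} {U : 'M[R]_(k, d)} : U *m U^T = 1%:M ->
  (exists v : V, enorm v = 1 /\ v *m U^T = 0) ->
  exists a b u, [/\ K a, K b, u *m U^T = 0 /\ dot u u = 1,
    orthproj (col_mx U u) b = orthproj (col_mx U u) a &
    3 * eps < 4 * dot (b - a) u /\
    forall x y, K x -> K y -> 3 * dot (x - y) u < 4 * dot (b - a) u].
Proof.
move=> UU unit_orth.
have [a [b [Ka Kb long_eps longest]]] := long_projected_chord UU unit_orth.
have PL_gt0 : 0 < enorm (orthproj U (b - a)) by have := eps_gt0; lra.
have [u [uU uu abL Pab]] := orthproj_direction UU (b - a) PL_gt0.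
exists a, b, u; rewrite abL; split => //; first by apply/eqP; rewrite -subr_eq0 -orthprojB Pab.
split => // x y Kx Ky; apply: le_lt_trans (longest _ _ Kx Ky); rewrite ler_pM2l //.
rewrite -(dot_orthproj _ _ uU); apply: le_trans (dot_le_enorm _ _) _.
by rewrite /enorm uu sqrtr1 mulr1.
Qed.

Lemma exists_level_on_chord {a b z u : V} {L s : R} :
  dot (b - a) u = L -> 18 * `|s| <= L -> - L < 3 * dot (z - a) u < 4 * L ->
  exists2 tau, 0 <= tau <= 1 &
    dot ((1/3) *: z + (2/3) *: ((1 - tau) *: a + tau *: b)) u = dot a u + L / 2 + s.
Proof.
move=> abL sL /andP[zlo zhi]; set h := dot (z - a) u in zlo zhi.
have L_gt0 : 0 < L by lra.
have sabs : - `|s| <= s <= `|s| by rewrite -ler_norml.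
have den_gt0 : 0 < 2 * L / 3 by rewrite divr_gt0 ?mulr_gt0.
exists ((L / 2 + s - h / 3) / (2 * L / 3)).
  apply/andP; split; first by rewrite divr_ge0 ?(ltW den_gt0) //; lra.
  by rewrite ler_pdivrMr // mul1r; lra.
have zu : dot z u = h + dot a u by rewrite /h dotBl subrK.
have bu : dot b u = dot a u + L by rewrite -abL dotBl addrC subrK.
rewrite !(dotDl, dotZl) zu bu; field; lra.
Qed.

Lemma proj_contains_ball_step k (U : 'M[R]_(k, d)) r :
  U *m U^T = 1%:M -> r <= eps -> (exists v : V, enorm v = 1 /\ v *m U^T = 0) ->
  (forall u : V, u *m U^T = 0 -> dot u u = 1 -> proj_contains_ball (col_mx U u) r) ->
  proj_contains_ball U (r / 24).
Proof.
move=> UU r_le unit_orth IH.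
have [a [b [u [Ka Kb [uU uu] Pb [long_eps chord_dot_lt]]]]] :=
  long_chord_direction UU unit_orth.
have [L abL] : exists L, dot (b - a) u = L by eexists.
rewrite abL in long_eps chord_dot_lt; have L_gt0 : 0 < L by have := eps_gt0; lra.
have u1 : enorm u = 1 by rewrite /enorm uu sqrtr1.
have U'U' := col_mx_orthonormal UU uU uu.
have [c' ball'] := IH u uU uu.
(* The preimage of [c + w] is [z / 3 + 2/3 q] with [q] on the chord [a, b]: the
   induction hypothesis at [3 w'] fixes the components orthogonal to [u], and the
   position of [q] on the chord fixes the [u]-coordinate. *)
exists ((1/3) *: c' + (2/3) *: orthproj (col_mx U u) a + (dot a u + L / 2) *: u)
  => w wU w_le.
pose s := dot w u; pose w' := orthproj (col_mx U u) w.
have ew : w = w' + s *: u by rewrite /w' orthproj_col_mx // orthproj_id // subrK.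
have r_ge0 : 0 <= r by have := enorm_ge0 w; lra.
have [z Kz Pz] : exists2 z, K z & orthproj (col_mx U u) z = c' + 3 *: w'.
  apply: ball'; first by rewrite -scalemxAl orthproj_orth // scaler0.
  rewrite enormZ ger0_norm //; have := enorm_orthproj_le U'U' w; lra.
have [tau tau01 xu] : exists2 tau, 0 <= tau <= 1 &
    dot ((1/3) *: z + (2/3) *: ((1 - tau) *: a + tau *: b)) u = dot a u + L / 2 + s.
  apply: (exists_level_on_chord abL).
    have : `|s| <= r / 24 by apply: le_trans (cauchy_schwarz _ _) _; rewrite u1 mulr1.
    by have := eps_gt0; lra.
  have := chord_dot_lt _ _ Kb Kz; have := chord_dot_lt _ _ Kz Ka.
  by rewrite !dotBl; move: abL; rewrite dotBl; lra.
have Kx : K ((1/3) *: z + (2/3) *: ((1 - tau) *: a + tau *: b)).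
  rewrite (_ : 1/3 = 1 - 2/3); last by field.
  by apply: Kconvex => //; [exact: Kconvex | apply/andP; split; lra].
move: Kx xu; set x := (1/3) *: z + _ => Kx xu; exists x => //.
rewrite -[orthproj U x](subrK (dot x u *: u)) -orthproj_col_mx // xu ew.
rewrite !(orthprojD, orthprojZ) Pz Pb.
move: (orthproj _ a) => Pa; apply/rowP => j; rewrite !mxE; by field.
Qed.

Lemma proj_contains_ball_codim {m k} {U : 'M[R]_(k, d)} :
  U *m U^T = 1%:M -> (d - k <= m)%N -> proj_contains_ball U (eps / 24 ^+ m).
Proof.
elim: m k U => [|m IH] k U UU codim;
  have [[v [v1 vU]]|] := pselect (exists v : V, enorm v = 1 /\ v *m U^T = 0);
  try exact: proj_contains_ball_trivial.
  by have := orthonormal_rows_lt_dim UU vU (enorm1_dotxx v1); lia.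
rewrite exprSr invfM mulrA; apply: proj_contains_ball_step => //; last 2 first.
- by exists v.
- move=> u uU uu; apply: IH; first exact: col_mx_orthonormal.
  by rewrite addn1 subnS; lia.
by rewrite ler_pdivrMr ?exprn_gt0 // ler_peMr ?exprn_ege1 ?ler1n // ltW.
Qed.

Lemma convex_contains_ball : exists c, forall w, enorm w <= eps / 24 ^+ d -> K (c + w).
Proof.
have U0 : (0 : 'M[R]_(0, d)) *m 0^T = 1%:M by apply/matrixP => -[].
have [c ball] := proj_contains_ball_codim U0 (leq_subr 0 d).
exists c => w w_le; have [|x Kx] := ball w _ w_le; first by rewrite trmx0 mulmx0.
by rewrite /orthproj trmx0 !mulmx0 subr0 => <-.
Qed.
End Inradius.

Section Vertical.
Context {R : realType} {d : nat}.
Notation V := 'rV[R]_d.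
Implicit Types x y u : V.
Lemma dot_eI x (j : Ipm d) : dot x (eI R j) = if j.2 then x 0 j.1 else - x 0 j.1.
Proof.
rewrite /dot (bigD1 j.1) //= big1 => [|k /negbTE kj]; last by rewrite mxE kj mulr0.
by rewrite addr0 mxE eqxx; case: j.2; rewrite ?mulr1 ?mulrN1.
Qed.

Lemma dot_eIeI (j : Ipm d) : dot (eI R j) (eI R j) = 1.
Proof. by rewrite dot_eI mxE eqxx; case: j.2; rewrite ?opprK. Qed.
Lemma enorm_eI (j : Ipm d) : enorm (eI R j) = 1.
Proof. by rewrite /enorm dot_eIeI sqrtr1. Qed.

Context {i : Ipm d}.
Notation e := (eI R i).

Lemma proj_orthproj x : proj i x = orthproj e x.
Proof. by rewrite /orthproj mulmx_tr_row. Qed.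

Lemma projD x y : proj i (x + y) = proj i x + proj i y.
Proof. by rewrite !proj_orthproj orthprojD. Qed.
Lemma projZ (a : R) x : proj i (a *: x) = a *: proj i x.
Proof. by rewrite !proj_orthproj orthprojZ. Qed.
Lemma projB x y : proj i (x - y) = proj i x - proj i y.
Proof. by rewrite !proj_orthproj orthprojB. Qed.
Lemma proj_eI : proj i e = 0.
Proof. by rewrite /proj dot_eIeI scale1r subrr. Qed.
Lemma dot_proj_eI x : dot (proj i x) e = 0.
Proof. by rewrite /proj dotBl dotZl dot_eIeI mulr1 subrr. Qed.
Lemma proj_id x : dot x e = 0 -> proj i x = x.
Proof. by rewrite /proj => ->; rewrite scale0r subr0. Qed.
Lemma proj_decomp x : x = proj i x + dot x e *: e.
Proof. by rewrite subrK. Qed.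
Lemma proj_proj x : proj i (proj i x) = proj i x.
Proof. by rewrite proj_id ?dot_proj_eI. Qed.
Lemma proj_vshift x t : proj i (x + t *: e) = proj i x.
Proof. by rewrite projD projZ proj_eI scaler0 addr0. Qed.
Lemma enorm_proj_le x : enorm (proj i x) <= enorm x.
Proof.
rewrite proj_orthproj; apply: enorm_orthproj_le.
by apply/matrixP => j k; rewrite (ord1 j) (ord1 k) -dot_mulmx_tr dot_eIeI !mxE.
Qed.

Lemma Vreg_eI : Vreg i e.
Proof.
split => [|j _]; first exact: enorm_eI.
rewrite dot_eIeI; apply: le_trans (ler_norm _) (le_trans (cauchy_schwarz _ _) _).
by rewrite enorm_eI enorm_eI mulr1.
Qed.

Lemma Vreg_abs_coord_le {u} : Vreg i u -> forall k, `|u 0 k| <= dot u e.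
Proof.
move=> [_ u_max] k.
have dir_le b : dot u (eI R (k, b)) <= dot u e.
  by have [-> //|ne] := eqVneq (k, b) i; apply: u_max.
by rewrite ler_norml; move: (dir_le true) (dir_le false); rewrite !dot_eI /= lerNl => -> ->.
Qed.

Lemma Vreg_dot_eI_ge {u} : Vreg i u -> 1 <= d%:R * dot u e.
Proof.
move=> Vu; have coord_le := Vreg_abs_coord_le Vu; have [u1 _] := Vu.
have ue_ge0 : 0 <= dot u e := le_trans (normr_ge0 _) (coord_le i.1).
have ue_le1 : dot u e <= 1.
  by apply: le_trans (dot_le_enorm _ _) _; rewrite u1 enorm_eI mulr1.
have sq_ge : 1 <= d%:R * dot u e ^+ 2.
  have -> : d%:R * dot u e ^+ 2 = \sum_(k < d) dot u e ^+ 2.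
    by rewrite sumr_const card_ord mulr_natl.
  rewrite -(enorm1_dotxx u1).
  apply: ler_sum => k _; rewrite -expr2 -real_normK ?num_real //.
  by rewrite lerXn2r ?nnegrE ?normr_ge0.
have : 0 <= d%:R * (dot u e * (1 - dot u e)) by rewrite !mulr_ge0 ?subr_ge0.
move: sq_ge; rewrite expr2; lra.
Qed.

Lemma Vreg_dot_eI_gt0 {u} : Vreg i u -> 0 < dot u e.
Proof.
move=> Vu; have := Vreg_dot_eI_ge Vu.
rewrite lt_def (le_trans (normr_ge0 _) (Vreg_abs_coord_le Vu i.1)) andbT.
by apply: contraTneq => ->; rewrite mulr0 ler10.
Qed.

Lemma Vreg_inv_dot_eI_le {u} : Vreg i u -> (dot u e)^-1 <= d%:R.
Proof.
move=> Vu; rewrite -[_^-1]mul1r ler_pdivrMr ?Vreg_dot_eI_gt0 //.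
exact: Vreg_dot_eI_ge.
Qed.
End Vertical.

(* The height at which the boundary hyperplane of [Hplus K u] meets the vertical line
   through [y]. *)
Definition hplane_height {R : realType} {d : nat} (K : set 'rV[R]_d) (i : Ipm d)
  (y u : 'rV[R]_d) : R := (supp K u - dot y u) / dot u (eI R i).
Definition Sreg_height {R : realType} {d : nat} (K : set 'rV[R]_d) (i : Ipm d)
  (y : 'rV[R]_d) : R := inf [set hplane_height K i y u | u in Vreg i].
Definition graph_point {R : realType} {d : nat} (K : set 'rV[R]_d) (i : Ipm d)
  (y : 'rV[R]_d) : 'rV[R]_d := proj i y + Sreg_height K i (proj i y) *: eI R i.

Section Height.
Context {R : realType} {d : nat}.
Notation V := 'rV[R]_d.
Implicit Types x y z u : V.
Context {K : set V} {M : R} {x0 : V} {i : Ipm d}.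
Hypotheses (KM : forall x, K x -> enorm x <= M) (Kx0 : K x0).
Notation e := (eI R i).

Lemma hplane_height_lb y {u} :
  Vreg i u -> - (d%:R * enorm (x0 - y)) <= hplane_height K i y u.
Proof.
move=> Vu; have [u1 _] := Vu; have ue_gt0 := Vreg_dot_eI_gt0 Vu.
rewrite /hplane_height ler_pdivlMr //.
have supp_ge : dot x0 u - dot y u <= supp K u - dot y u.
  by rewrite lerD2r (le_supp KM Kx0).
have dot_ge : - enorm (x0 - y) <= dot x0 u - dot y u.
  rewrite -dotBl lerNl -dotNl -enormN.
  by apply: le_trans (dot_le_enorm _ _) _; rewrite u1 mulr1.
have : 0 <= enorm (x0 - y) * (d%:R * dot u e - 1).
  by rewrite mulr_ge0 ?enorm_ge0 // subr_ge0 Vreg_dot_eI_ge.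
nra.
Qed.

Lemma has_inf_hplane_height y : has_inf [set hplane_height K i y u | u in Vreg i].
Proof.
split; first by exists (hplane_height K i y e), e => //; exact: Vreg_eI.
by exists (- (d%:R * enorm (x0 - y))) => _ [u Vu <-]; apply: hplane_height_lb.
Qed.

Lemma Sreg_height_le y {u} : Vreg i u -> Sreg_height K i y <= hplane_height K i y u.
Proof. by move=> Vu; apply: ge_inf (proj2 (has_inf_hplane_height y)) _ _; exists u. Qed.

Lemma Sreg_height_ge y t :
  (forall u, Vreg i u -> t <= hplane_height K i y u) -> t <= Sreg_height K i y.
Proof.
move=> t_le; apply: lb_le_inf => [|_ [u Vu <-]]; last exact: t_le.
by exists (hplane_height K i y e), e => //; exact: Vreg_eI.
Qed.

Lemma hplane_height_lipschitz y y' {u} : Vreg i u ->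
  hplane_height K i y u <= hplane_height K i y' u + d%:R * enorm (y - y').
Proof.
move=> Vu; have [u1 _] := Vu; have ue_gt0 := Vreg_dot_eI_gt0 Vu.
have -> : hplane_height K i y u = hplane_height K i y' u + dot (y' - y) u / dot u e.
  by rewrite /hplane_height dotBl; field; rewrite gt_eqF.
rewrite lerD2l; apply: le_trans (_ : enorm (y - y') * (dot u e)^-1 <= _); last first.
  by rewrite mulrC ler_wpM2r ?enorm_ge0 ?Vreg_inv_dot_eI_le.
rewrite ler_pM2r ?invr_gt0 // enormB.
by apply: le_trans (dot_le_enorm _ _) _; rewrite u1 mulr1.
Qed.

Lemma Sreg_height_lipschitz y y' :
  Sreg_height K i y - Sreg_height K i y' <= d%:R * enorm (y - y').
Proof.
suff : Sreg_height K i y - d%:R * enorm (y - y') <= Sreg_height K i y' by lra.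
apply: Sreg_height_ge => u Vu; rewrite lerBlDr.
exact: le_trans (Sreg_height_le _ Vu) (hplane_height_lipschitz _ _ Vu).
Qed.

Lemma Sreg_vertical y t : Sreg K i (y + t *: e) <-> t <= Sreg_height K i y.
Proof.
have hplaneP u : Vreg i u -> Hplus K u (y + t *: e) <-> t <= hplane_height K i y u.
  move=> Vu; rewrite /Hplus /hplane_height /= ler_pdivlMr ?Vreg_dot_eI_gt0 //.
  by rewrite lerBrDl dotDl dotZl (dotC e u).
split => [Sy|t_le u Vu]; first by apply: Sreg_height_ge => u Vu; apply/hplaneP/Sy.
by apply/hplaneP => //; apply: le_trans t_le (Sreg_height_le _ Vu).
Qed.

Lemma graph_point_lipschitz y y' :
  enorm (graph_point K i y - graph_point K i y') <= (1 + d%:R) * enorm (y - y').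
Proof.
have H1 := Sreg_height_lipschitz (proj i y) (proj i y').
have H2 := Sreg_height_lipschitz (proj i y') (proj i y).
rewrite enormB -projB in H2; rewrite -projB in H1.
have proj_le := enorm_proj_le (i := i) (y - y').
have dproj_le := ler_wpM2l (ler0n R d) proj_le.
rewrite /graph_point opprD addrACA -scalerBl -projB.
apply: le_trans (enormD _ _) _; rewrite enormZ enorm_eI mulr1 mulrDl mul1r.
by apply: lerD => //; rewrite ler_norml; apply/andP; split; lra.
Qed.

Context {al : R}.

Lemma Kalpha_le_height {x} : Kalpha K i al x -> dot x e <= Sreg_height K i (proj i x).
Proof. by move=> [Sx _]; apply/Sreg_vertical; rewrite -proj_decomp. Qed.

Lemma Kalpha_graph_point {x} : Kalpha K i al x -> Kalpha K i al (graph_point K i x).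
Proof.
move=> [Sx thick]; split; first exact/Sreg_vertical.
by rewrite /graph_point proj_vshift proj_proj.
Qed.

Lemma Kalpha_shift_down {x s} : Kalpha K i al x -> s <= 0 -> Kalpha K i al (x + s *: e).
Proof.
move=> Kx s_le0; have [_ thick] := Kx; split; last by rewrite proj_vshift.
rewrite {1}(proj_decomp (i := i) x) -addrA -scalerDl; apply/Sreg_vertical.
by apply: le_trans _ (Kalpha_le_height Kx); rewrite gerDl.
Qed.

Lemma eclosure_Kalpha_le_height {x} :
  eclosure (Kalpha K i al) x -> dot x e <= Sreg_height K i (proj i x).
Proof.
move=> xcl; rewrite -subr_le0.
apply: (eclosure_lipschitz_le (fun z => dot z e - Sreg_height K i (proj i z))
          (1 + d%:R) _ _ _ xcl) => [||z Kz]; last by rewrite subr_le0 Kalpha_le_height.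
  by rewrite addr_ge0.
move=> a b; have := Sreg_height_lipschitz (proj i b) (proj i a).
have := ler_wpM2l (ler0n R d) (enorm_proj_le (i := i) (a - b)).
have := dot_le_enorm (a - b) e; rewrite enorm_eI mulr1 dotBl (enormB (proj i b)) -projB.
lra.
Qed.

Lemma eclosure_Kalpha_thick {x} : eclosure (Kalpha K i al) x ->
  forall r, 0 < r -> exists2 z, K z & enorm (proj i x - proj i z) <= al + r.
Proof.
move=> xcl r r_gt0; have [y [_ [_ [z Kz yz]]] xy] := xcl r r_gt0.
exists z => //; rewrite -(subrK (proj i y) (proj i x)) -addrA [al + r]addrC.
apply: le_trans (enormD _ _) (lerD _ yz).
by rewrite enormB -projB; apply: le_trans (enorm_proj_le _) (ltW xy).
Qed.

Lemma supporting_normal_upward {x y v} : Kalpha K i al y ->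
  (forall z, Kalpha K i al z -> dot z v <= dot x v) -> dot v e != 0 -> 0 < dot e v.
Proof.
move=> Ky v_supp; rewrite dotC => ev_neq0; rewrite ltNge; apply/negP => ev_le0.
have ev_lt0 : dot e v < 0 by rewrite lt_neqAle ev_neq0.
pose s := (`|dot x v - dot y v| + 1) / dot e v.
have s_lt0 : s < 0 by rewrite pmulr_rlt0 ?invr_lt0 // ltr_wpDl.
have := v_supp _ (Kalpha_shift_down Ky (ltW s_lt0)).
rewrite dotDl dotZl mulfVK ?lt_eqF //.
by have := ler_norm (dot x v - dot y v); lra.
Qed.

Lemma lower_boundary_Kalpha_graph {x} :
  lower_boundary (Kalpha K i al) i x -> graph_point K i x = x.
Proof.
move=> [[xcl _] [v [ve_neq0 v_supp]]].
have [y Ky _] := xcl 1 ltr01.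
have ev_gt0 := supporting_normal_upward Ky v_supp ve_neq0.
have x_le := eclosure_Kalpha_le_height xcl.
suff x_ge : Sreg_height K i (proj i x) <= dot x e.
  rewrite /graph_point [in RHS](proj_decomp (i := i) x); congr (_ + _ *: _).
  by apply/le_anti; rewrite x_ge x_le.
have : dot (graph_point K i x) v <= dot x v.
  apply: (eclosure_lipschitz_le (fun z => dot (graph_point K i z) v)
            (enorm v * (1 + d%:R)) _ _ _ xcl) => [||z Kz].
  - by rewrite mulr_ge0 ?enorm_ge0 ?addr_ge0.
  - move=> a b; rewrite -dotBl dotC -mulrA.
    apply: le_trans (dot_le_enorm _ _) (ler_wpM2l (enorm_ge0 _) (graph_point_lipschitz _ _)).
  - exact/v_supp/Kalpha_graph_point.
have -> : dot x v = dot (proj i x) v + dot x e * dot e v.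
  by rewrite {1}(proj_decomp (i := i) x) dotDl dotZl.
by rewrite /graph_point dotDl dotZl lerD2l ler_pM2r.
Qed.
End Height.

Section Homothety.
Context {R : realType} {d : nat}.
Notation V := 'rV[R]_d.
Implicit Types x y z c : V.

Definition homothety c (lam : R) y : V := c + lam *: (y - c).

Lemma homothety_lipschitz c lam x y :
  enorm (homothety c lam x - homothety c lam y) = `|lam| * enorm (x - y).
Proof.
by rewrite /homothety opprD addrACA subrr add0r -scalerBr opprB addrA subrK enormZ.
Qed.

Lemma proj_homothety (i : Ipm d) c lam y :
  proj i (homothety c lam y) = homothety (proj i c) lam (proj i y).
Proof. by rewrite /homothety projD projZ projB. Qed.

Lemma thick_proj_homothety {K : set V} {i : Ipm d} {c : V} {r delta : R} {z y : V} :
  convex_set K -> 0 < r -> 0 < delta -> (forall w, enorm w <= r -> K (c + w)) ->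
  K z -> dot y (eI R i) = 0 -> enorm (y - proj i z) <= delta ->
  exists2 k, K k & y = proj i (homothety c (1 + delta / r) k).
Proof.
move=> Kconvex r_gt0 delta_gt0 ball Kz ye yz.
set lam := 1 + delta / r.
have lam_gt1 : 1 < lam by rewrite ltrDl divr_gt0.
pose w := (r / delta) *: (y - proj i z).
have Kw : K (c + w).
  apply: ball; rewrite enormZ ger0_norm; last by rewrite divr_ge0 // ltW.
  by rewrite mulrAC ler_pdivrMr // ler_pM2l.
have wproj : proj i w = w.
  by apply: proj_id; rewrite dotZl dotBl ye dot_proj_eI subrr mulr0.
have yw : y = proj i z + (lam - 1) *: w.
  have -> : lam - 1 = delta / r by rewrite /lam addrAC subrr add0r.
  rewrite /w scalerA mulrA divfK ?gt_eqF // mulfV ?gt_eqF // scale1r.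
  by rewrite addrC subrK.
have lam_gt0 : 0 < lam by apply: lt_trans lam_gt1.
clearbody w; pose mu := 1 - lam^-1.
exists ((1 - mu) *: z + mu *: (c + w)).
  apply: Kconvex => //; apply/andP; split; first by rewrite subr_ge0 invf_le1 ?ltW.
  by rewrite gerBl invr_ge0 ltW.
rewrite proj_homothety /homothety /mu !(projD, projZ) wproj {1}yw.
move: (proj i z) (proj i c) => Z C.
by apply/rowP => j; rewrite !mxE; field; rewrite gt_eqF.
Qed.
End Homothety.

Lemma exists_boundary_above {R : realType} {d : nat} {K : set 'rV[R]_d} {M : R}
    (i : Ipm d) {k} :
  (forall x, K x -> enorm x <= M) -> K k ->
  exists b, eboundary K b /\ proj i b = proj i k.
Proof.
move=> KM Kk; pose e := eI R i; pose T := [set t : R | K (k + t *: e)].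
have hT : has_sup T.
  split; first by exists 0; rewrite /T /= scale0r addr0.
  exists (M - dot k e) => t Tt; rewrite lerBrDl.
  have := KM _ Tt; have := dot_le_enorm (k + t *: e) e.
  by rewrite enorm_eI mulr1 dotDl dotZl dot_eIeI mulr1; lra.
have le_supT := sup_upper_bound hT.
exists (k + sup T *: e); split; last exact: proj_vshift.
split=> [r r_gt0|[r r_gt0 ball]].
  have [t Tt supT_lt] := sup_adherent r_gt0 hT; exists (k + t *: e) => //.
  rewrite opprD addrACA subrr add0r -scalerBl enormZ enorm_eI mulr1.
  by rewrite ler0_norm ?subr_le0 ?le_supT //; lra.
have : K (k + sup T *: e + (r / 2) *: e).
  apply: ball; rewrite /eball /= addrAC subrr add0r enormZ enorm_eI mulr1.
  by rewrite gtr0_norm ?divr_gt0 //; lra.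
by rewrite -addrA -scalerDl => /le_supT; lra.
Qed.

Section Hausdorff.
Context {R : realType} {d : nat}.
Notation V := 'rV[R]_d.

Lemma le_hausdorff s {A B : set V} : A `<=` B -> (hausdorff s A <= hausdorff s B)%E.
Proof.
move=> AB; apply: ge_ereal_sup => _ [delta delta_gt0 <-].
apply: le_trans (ereal_sup_ubound _); last by exists delta.
apply: le_ereal_inf_tmp => _ [C [r [r_bd C_diam BC ->]]].
by apply: ereal_inf_lbound; exists C, r; split => //; apply: subset_trans BC.
Qed.

Lemma hausdorff_lipschitz_image s (A : set V) (g : V -> V) (L : R) : 0 < L ->
  (forall x y, enorm (g x - g y) <= L * enorm (x - y)) ->
  (hausdorff s (g @` A) <= (L ^+ s)%:E * hausdorff s A)%E.
Proof.
move=> L_gt0 g_lip; apply: ge_ereal_sup => _ [delta delta_gt0 <-].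
have deltaL_gt0 : 0 < delta / L by rewrite divr_gt0.
apply: (@le_trans _ _ ((L ^+ s)%:E * hausdorff_delta s (delta / L) A)%E); last first.
  apply: lee_wpmul2l; first by rewrite lee_fin exprn_ge0 // ltW.
  by apply: ereal_sup_ubound; exists (delta / L).
rewrite /hausdorff_delta -ereal_inf_pZl ?exprn_gt0 //.
apply: le_ereal_inf_tmp => _ [_ [C [r [r_bd C_diam AC ->]]] <-].
apply: ereal_inf_lbound.
exists (fun n => g @` (C n `&` A)), (fun n => L * r n); split.
- move=> n; have /andP[r_ge0 r_le] := r_bd n.
  rewrite mulr_ge0 ?(ltW L_gt0) //=; apply: le_trans (ler_wpM2l (ltW L_gt0) r_le) _.
  by rewrite mulrC divfK ?gt_eqF.
- move=> n _ _ [x [Cx _] <-] [y [Cy _] <-].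
  by apply: le_trans (g_lip x y) _; rewrite ler_pM2l // C_diam.
- by move=> _ [a Aa <-]; have [n _ Cna] := AC a Aa; exists n => //; exists a.
- rewrite -nneseriesZl; last by move=> n _; rewrite lee_fin exprn_ge0 //; case/andP: (r_bd n).
  by apply: eq_eseriesr => n _; rewrite -EFinM exprMn.
Qed.
End Hausdorff.

Lemma lower_boundary_Kalpha_sub_image {R : realType} {d : nat} {K : set 'rV[R]_d}
    {eps M : R} {x0 c : 'rV[R]_d} (i : Ipm d) :
  convex_set K -> (forall x, K x -> enorm x <= M) -> K x0 -> 0 < eps ->
  (forall w, enorm w <= eps / 24 ^+ d -> K (c + w)) ->
  lower_boundary (Kalpha K i (2 * eps)) i `<=`
    (graph_point K i \o homothety c (1 + 3 * 24 ^+ d)) @` eboundary K.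
Proof.
move=> Kconvex KM Kx0 eps_gt0 ball x lbx.
have [z Kz xz] := eclosure_Kalpha_thick lbx.1.1 _ eps_gt0.
have [k Kk x_hom] : exists2 k, K k & proj i x = proj i (homothety c (1 + 3 * 24 ^+ d) k).
  have -> : 3 * 24 ^+ d = 3 * eps / (eps / 24 ^+ d) :> R.
    by field; rewrite !gt_eqF ?exprn_gt0.
  apply: (thick_proj_homothety Kconvex _ _ ball Kz);
    rewrite ?divr_gt0 ?mulr_gt0 ?exprn_gt0 ?dot_proj_eI //.
  by move: xz; lra.
have [b [b_bd pb]] := exists_boundary_above i KM Kk.
exists b => //=; rewrite -(lower_boundary_Kalpha_graph KM Kx0 lbx) /graph_point.
by rewrite !proj_homothety pb -proj_homothety -x_hom.
Qed.

Theorem lemma1 (R : realType) (d : nat) :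
  exists C : R, 0 < C /\
    forall (K : set 'rV[R]_d) (eps : R),
      convex_body K -> 0 < eps ->
      (forall u : 'rV[R]_d, enorm u = 1 -> eps <= width K u) ->
      forall i : Ipm d,
        (area_lower (Kalpha K i (2 * eps)) i <= C%:E * area K)%E.
Proof.
pose lam : R := 1 + 3 * 24 ^+ d.
have lam_gt0 : 0 < lam by rewrite ltr_wpDr ?mulr_ge0 ?exprn_ge0.
have L_gt0 : 0 < (1 + d%:R) * lam by rewrite mulr_gt0 ?ltr_wpDr.
exists (((1 + d%:R) * lam) ^+ d.-1); split; first by rewrite exprn_gt0.
move=> K eps [Kconvex _ [M KM] [x0 [r r_gt0 ball_x0]]] eps_gt0 Kwidth i.
have Kx0 : K x0 by apply: ball_x0; rewrite /eball /= subrr enorm0.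
have [c ball] := convex_contains_ball Kconvex KM Kx0 eps_gt0 Kwidth.
have sub := lower_boundary_Kalpha_sub_image i Kconvex KM Kx0 eps_gt0 ball.
rewrite /area_lower /area; apply: le_trans (le_hausdorff _ sub) _.
apply: hausdorff_lipschitz_image => // y y'.
apply: le_trans (graph_point_lipschitz KM Kx0 _ _) _.
by rewrite homothety_lipschitz gtr0_norm // mulrA.
Qed.
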